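(* Let $K$ be a field, $c\in K\setminus\{0\}$, $n\ge1$, and let $f$ be a $c$-frieze of order $n$ over $K$. Then there exist $s,t\in K$ such that $f(2i,2i+n)=s$ and $f(2i+1,2i+n+1)=t$ for all $i\in\mathbb{Z}$ (so row $n+1$ of $f$ alternates $\dots,s,t,s,t,\dots$), and moreover $st=(-c)^{n+1}$.
   Context: The $c$-continuant polynomials $P_k=P_k^c$ ($k\ge-1$) are defined by $P_{-1}=0$, $P_0=1$, and for $k\ge1$, $P_k(x_1,\dots,x_k)=x_kP_{k-1}(x_1,\dots,x_{k-1})+cP_{k-2}(x_1,\dots,x_{k-2})$. A family $(x_i)_{i\in\mathbb{Z}}$ in $K$ is $n$-admissible if $P_{n+2}(x_i,\dots,x_{i+n+1})=0$ for all $i$. Let $\mathbb{B}_n=\{(i,j)\in\mathbb{Z}^2:-2\le j-i\le n+1\}$. A $c$-frieze of order $n$ is a function $f:\mathbb{B}_n\to K$ for which there is an $n$-admissible family $(x_i)$ with $f(i,j)=P_{j-i+1}(x_i,\dots,x_j)$ for all $(i,j)\in\mathbb{B}_n$. Row $k$ ($-1\le k\le n+2$) of $f$ consists of the values $f(i,i+k-1)$, $i\in\mathbb{Z}$. *)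

From mathcomp Require Import all_boot all_order all_algebra.
Set Implicit Arguments. Unset Strict Implicit. Unset Printing Implicit Defensive.
Import Order.TTheory GRing.Theory Num.Theory.
Local Open Scope ring_scope.

(* c-continuant: contP c y k = P_k(y 1, ..., y k), with P_{-1}=0 encoded by
   the pair recursion: contP c y 0 = 1, contP c y 1 = y 1 * 1 + c * 0 = y 1,
   contP c y (k+2) = y (k+2) * P_{k+1} + c * P_k. *)
Fixpoint contP2 (K : fieldType) (c : K) (y : nat -> K) (k : nat) : K * K :=
  (* returns (P_k, P_{k-1}) *)
  match k with
  | 0 => (1, 0)
  | k'.+1 => let (p, q) := contP2 c y k' in (y k'.+1 * p + c * q, p)
  end.

Definition contP (K : fieldType) (c : K) (y : nat -> K) (k : nat) : K :=
  (contP2 c y k).1.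

(* P_k(x_i, ..., x_{i+k-1}) for a Z-indexed family x *)
Definition contZ (K : fieldType) (c : K) (x : int -> K) (i : int) (k : nat) : K :=
  contP c (fun m : nat => x (i + m%:Z - 1)) k.

Definition admissible (K : fieldType) (c : K) (n : nat) (x : int -> K) : Prop :=
  forall i : int, contZ c x i n.+2 = 0.

Definition inB (n : nat) (i j : int) : Prop :=
  -2 <= j - i /\ j - i <= n.+1%:Z.

(* f : Z x Z -> K is a c-frieze of order n (only its values on B_n matter).
   For (i,j) in B_n, j - i + 1 >= -1; P_{-1} = 0 is handled separately. *)
Definition is_frieze (K : fieldType) (c : K) (n : nat) (f : int -> int -> K) : Prop :=
  exists x : int -> K, admissible c n x /\
    forall i j : int, inB n i j ->
      f i j = (if j - i + 1 < 0 then 0 else contZ c x i (absz (j - i + 1))).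

From mathcomp Require Import all_boot all_order all_algebra.
From mathcomp Require Import ring zify.
Import Order.TTheory GRing.Theory Num.Theory.
Local Open Scope ring_scope.
Set Implicit Arguments. Unset Strict Implicit. Unset Printing Implicit Defensive.

(* The continuants satisfy the Casoratian identity
     P_{k}(x_i..x_{i+k-1}) P_{k}(x_{i+1}..x_{i+k})
       - P_{k+1}(x_i..x_{i+k}) P_{k-1}(x_{i+1}..x_{i+k-1}) = (-c)^k.
   For an n-admissible family with k = n+1 the second product vanishes, so
   consecutive entries u_i, u_{i+1} of row n+1 multiply to (-c)^(n+1) != 0.
   Hence u_{i+2} = u_i, and row n+1 alternates s, t, s, t, ... *)

Section Continuants.

Variables (K : fieldType) (c : K).

Lemma contP2S (y : nat -> K) k :
  contP2 c y k.+1 = (y k.+1 * (contP2 c y k).1 + c * (contP2 c y k).2, (contP2 c y k).1).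
Proof. by rewrite /=; case: (contP2 c y k). Qed.

Lemma contP2_snd (y : nat -> K) k : (contP2 c y k.+1).2 = contP c y k.
Proof. by rewrite contP2S. Qed.

Lemma eq_contP2 (y z : nat -> K) k : y =1 z -> contP2 c y k = contP2 c z k.
Proof. by move=> eyz; elim: k => [|k IH] //=; rewrite IH eyz. Qed.

Lemma contP2_det (y : nat -> K) k :
  (contP2 c y k.+1).2 * (contP2 c (fun m => y m.+1) k).1
  - (contP2 c y k.+1).1 * (contP2 c (fun m => y m.+1) k).2 = (- c) ^+ k.
Proof.
elim: k => [|k IH]; first by rewrite /= !mulr1 mulr0 subr0.
rewrite (contP2S y k.+1) (contP2S (fun m => y m.+1) k) exprS -IH /=.
by move: (contP2 c y k.+1) (contP2 c (fun m => y m.+1) k) => [a1 a0] [b1 b0] /=; ring.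
Qed.

Lemma contP_det (y : nat -> K) k :
  contP c y k.+1 * contP c (fun m => y m.+1) k.+1
  - contP c y k.+2 * contP c (fun m => y m.+1) k = (- c) ^+ k.+1.
Proof. by rewrite -(contP2_det y k.+1) !contP2_snd. Qed.

Lemma contZ_shift (x : int -> K) (i : int) k :
  contP c (fun m => x (i + m.+1%:Z - 1)) k = contZ c x (i + 1) k.
Proof.
rewrite /contZ /contP (@eq_contP2 _ (fun m => x (i + 1 + m%:Z - 1))) // => m.
by congr x; lia.
Qed.

Lemma contZ_det (x : int -> K) (i : int) k :
  contZ c x i k.+1 * contZ c x (i + 1) k.+1
  - contZ c x i k.+2 * contZ c x (i + 1) k = (- c) ^+ k.+1.
Proof. by rewrite -!contZ_shift; apply: contP_det. Qed.

Lemma admissible_contZ_mul n (x : int -> K) (i : int) :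
  admissible c n x -> contZ c x i n.+1 * contZ c x (i + 1) n.+1 = (- c) ^+ n.+1.
Proof. by move=> adm; rewrite -(contZ_det x i n) adm mul0r subr0. Qed.

End Continuants.

Lemma addr2_periodic (K : Type) (u : int -> K) :
  (forall j, u (j + 2) = u j) -> forall j i, u (j + 2 * i) = u j.
Proof.
move=> per j; elim/int_rec => [|m IH|m IH]; first by rewrite mulr0 addr0.
- by rewrite -IH -(per (j + 2 * m%:Z)); congr u; lia.
- by rewrite -IH -per; congr u; lia.
Qed.

Lemma addr2_periodic_of_mul_const (K : fieldType) (u : int -> K) (a : K) :
  a != 0 -> (forall j, u j * u (j + 1) = a) -> forall j, u (j + 2) = u j.
Proof.
move=> a0 mul_u j; have u1_neq0 : u (j + 1) != 0.
  by apply: contraNneq a0 => u1_eq0; rewrite -(mul_u j) u1_eq0 mulr0.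
apply: (mulIf u1_neq0); rewrite mulrC mul_u.
by rewrite -(mul_u (j + 1)) -addrA.
Qed.

Lemma frieze_row_contZ (K : fieldType) (c : K) n (f : int -> int -> K) (x : int -> K) :
  (forall i j, inB n i j ->
     f i j = (if j - i + 1 < 0 then 0 else contZ c x i (absz (j - i + 1)))) ->
  forall i, f i (i + n%:Z) = contZ c x i n.+1.
Proof.
move=> fE i; rewrite fE; last by split; lia.
by have -> : i + n%:Z - i + 1 = n.+1%:Z by lia.
Qed.

Theorem mainTheorem8 (K : fieldType) (c : K) (n : nat) (f : int -> int -> K) :
  c != 0 -> (1 <= n)%N -> is_frieze c n f ->
  exists s t : K,
    (forall i : int, f (2 * i) (2 * i + n%:Z) = s) /\
    (forall i : int, f (2 * i + 1) (2 * i + n%:Z + 1) = t) /\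
    s * t = (- c) ^+ n.+1.
Proof.
move=> c0 _ [x [adm fE]].
pose u i := contZ c x i n.+1.
have row_u i : f i (i + n%:Z) = u i := frieze_row_contZ fE i.
have mul_u i : u i * u (i + 1) = (- c) ^+ n.+1 := admissible_contZ_mul i adm.
have cn0 : (- c) ^+ n.+1 != 0 by rewrite expf_neq0 // oppr_eq0.
have per := addr2_periodic (addr2_periodic_of_mul_const cn0 mul_u).
exists (u 0), (u 1); split; [|split].
- by move=> i; rewrite row_u -(per 0 i) add0r.
- by move=> i; rewrite -addrA [n%:Z + 1]addrC addrA row_u (addrC _ 1) per.
- by rewrite -(mul_u 0) add0r.
Qed.
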